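(* Let $m\ge 0$ and $N\ge m+1$ be integers. For $k\ge 0$ put $c_k(N)=\sum_{i=0}^{N-1} i^k$ (with $0^0=1$), and let $H_m(N)$ be the $(m+1)\times(m+1)$ Hankel matrix whose $(r,s)$ entry ($1\le r,s\le m+1$) is $c_{r+s-2}(N)$. For $0\le i\le m$ let $M^{(m)}_{(i+1),1}(N)$ be the minor of $H_m(N)$ obtained by deleting row $i+1$ and column $1$ (for $m=0$ this minor is $1$), and set $$a_{im}(N)=(-1)^i\,\frac{M^{(m)}_{(i+1),1}(N)}{\det H_m(N)},\qquad h_m(n,N)=\sum_{i=0}^m a_{im}(N)\,n^i .$$ Then for every integer $n$ with $0\le n\le N-1$, $$h_m(n,N)=\frac{(m+1)^2}{N}\,{}_3F_2\!\left(\begin{matrix}-m,\ n+1,\ m+2\\ 2,\ N+1\end{matrix};1\right)=\frac{(m+1)^2}{N}\,Q_m(-1-n;\,1,\,0,\,-1-N),$$ where $Q_m$ denotes the Hahn polynomial defined below.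
   Context: ${}_3F_2\!\left(\begin{matrix}a_1,a_2,a_3\\ b_1,b_2\end{matrix};1\right)=\sum_{k\ge0}\frac{(a_1)_k(a_2)_k(a_3)_k}{(b_1)_k(b_2)_k\,k!}$, with $(a)_k=a(a+1)\cdots(a+k-1)$ the Pochhammer symbol; when $a_1=-m$ the sum terminates at $k=m$. The Hahn polynomial is defined by $Q_m(y;\alpha,\beta,M)={}_3F_2\!\left(\begin{matrix}-m,\ m+\alpha+\beta+1,\ -y\\ \alpha+1,\ -M\end{matrix};1\right)$, the sum taken from $k=0$ to $m$. The functions $h_m(n,N)$ are the discrete Shmaliy polynomials. *)

From HB Require Import structures.
From mathcomp Require Import all_boot all_order all_algebra.
Unset Printing Implicit Defensive.
Import Order.TTheory GRing.Theory Num.Theory.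
Local Open Scope ring_scope.

(* power sums c_k(N) = sum_{i=0}^{N-1} i^k, with 0^0 = 1 (expr0) *)
Definition csum (R : realFieldType) (k N : nat) : R :=
  \sum_(i < N) (i%:R) ^+ k.

(* Hankel matrix H_m(N), 0-indexed: entry (r,s) = c_{r+s}(N) *)
Definition hankel (R : realFieldType) (m N : nat) : 'M[R]_(m.+1) :=
  \matrix_(r < m.+1, s < m.+1) csum R (r + s) N.

(* minor M^{(m)}_{(i+1),1}(N): delete row i (0-indexed) and column 0 *)
Definition hminor (R : realFieldType) (m N : nat) (i : 'I_m.+1) : R :=
  \det (row' i (col' ord0 (hankel R m N))).

Definition acoef (R : realFieldType) (m N : nat) (i : 'I_m.+1) : R :=
  (-1) ^+ i * hminor R m N i / \det (hankel R m N).

Definition shmaliy (R : realFieldType) (m : nat) (n : R) (N : nat) : R :=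
  \sum_(i < m.+1) acoef R m N i * n ^+ i.

Definition poch (R : realFieldType) (a : R) (k : nat) : R :=
  \prod_(j < k) (a + j%:R).

Definition F32 (R : realFieldType) (a1 a2 a3 b1 b2 : R) (K : nat) : R :=
  \sum_(k < K.+1) (poch R a1 k * poch R a2 k * poch R a3 k)
                   / (poch R b1 k * poch R b2 k * (k`!)%:R).

Definition hahnQ (R : realFieldType) (m : nat) (y alpha beta M : R) : R :=
  F32 R (- m%:R) (m%:R + alpha + beta + 1) (- y) (alpha + 1) (- M) m.

From HB Require Import structures.
From mathcomp Require Import all_boot all_order all_algebra.
From mathcomp Require Import ring zify.
Import Order.TTheory GRing.Theory Num.Theory.
Local Open Scope ring_scope.

(* By Cramer's rule the coefficients a_{im}(N) form the first row of H_m(N)^-1.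
   Since H_m(N) is the Gram matrix of 1, x, ..., x^m for the inner product
   sum_{j<N} p(j) q(j), positive definite on polynomials of degree <= m < N,
   h_m(., N) is the unique polynomial of degree <= m with
   sum_{j<N} j^r h(j) = [r = 0] for all r <= m.
   The 3F2 side g has degree <= m, so it suffices to check
   sum_{j<N} p(j) g(j) = p(0) on the monic basis prod_{i<d} (x - (N-1-i)),
   d <= m, whose value at j is (-1)^d d! C(N-1-j, d).  Writing g in the
   binomials C(j+k, k), the identity sum_j C(N-1-j, d) C(j+k, k) =
   C(N+k, d+k+1) and the vanishing of (m+1)-st differences of polynomials of
   degree <= m reduce the left-hand side to C(N-1, d).  The Hahn form is the
   same 3F2 with two numerator parameters swapped. *)

Lemma sum_bin_rev_bin N r k :
  (\sum_(j < N) 'C(N - j.+1, r) * 'C(j + k, k) = 'C(N + k, r + k.+1))%N.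
Proof.
elim: N r => [|N IH] r.
  by rewrite big_ord0 bin_small // add0n addnS ltnS leq_addl.
rewrite big_ord_recr /= subnn addSn; case: r => [|r].
  rewrite bin0 mul1n add0n binS -(IH 0%N); congr (_ + _).
  by apply: eq_bigr => j _; rewrite !bin0.
rewrite bin0n mul0n addn0 addSn binS -(IH r.+1) -(IH r) -big_split /=.
by apply: eq_bigr => j _; rewrite subSS -subnSK // binS mulnDl.
Qed.

Section BinomialIdentities.

Variable R : comPzRingType.

(* (-1)^M times the M-th forward difference of C(_, d) at a. *)
Definition alt_bin_sum M a d : R :=
  \sum_(l < M.+1) (-1) ^+ l * 'C(M, l)%:R * 'C(a + l, d)%:R.

Lemma alt_bin_sumS M a d :
  alt_bin_sum M.+1 a d = alt_bin_sum M a d - alt_bin_sum M a.+1 d.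
Proof.
have -> : alt_bin_sum M a d
    = \sum_(l < M.+2) (-1) ^+ l * 'C(M, l)%:R * 'C(a + l, d)%:R.
  by rewrite big_ord_recr /= bin_small // mulr0 mul0r addr0.
rewrite /alt_bin_sum big_ord_recl [in RHS]big_ord_recl /= -addrA -sumrB.
rewrite !bin0; congr (_ + _); apply: eq_bigr => i _.
rewrite /bump /= !add1n binS natrD exprS addnS addSn; ring.
Qed.

Lemma alt_bin_sum_binS M a d :
  alt_bin_sum M a.+1 d.+1 = alt_bin_sum M a d.+1 + alt_bin_sum M a d.
Proof.
rewrite /alt_bin_sum -big_split; apply: eq_bigr => l _.
by rewrite addSn binS natrD mulrDr.
Qed.

Lemma alt_bin_sum_eq0 M a d : (d < M)%N -> alt_bin_sum M a d = 0.
Proof.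
elim: M a d => [|M IH] a [|d] // lt_dM; rewrite alt_bin_sumS.
  by apply/eqP; rewrite subr_eq0; apply/eqP/eq_bigr => l _; rewrite !bin0.
by rewrite alt_bin_sum_binS (IH a d) // addr0 subrr.
Qed.

Lemma sum_alt_bin_succ m d : (d <= m)%N ->
  \sum_(k < m.+1) (-1) ^+ k * 'C(m.+1, k.+1)%:R * 'C(m.+1 + k, d)%:R
    = 'C(m, d)%:R :> R.
Proof.
move=> le_dm; have := alt_bin_sum_eq0 m.+1 m d le_dm.
rewrite /alt_bin_sum big_ord_recl /= expr0 bin0 !mul1r addn0 => /eqP.
rewrite addr_eq0 => /eqP ->; rewrite -sumrN; apply: eq_bigr => k _.
by rewrite /bump /= add1n addnS -addSn exprS; ring.
Qed.

Lemma natr_ffact u d : (u ^_ d)%:R = \prod_(i < d) (u%:R - i%:R) :> R.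
Proof.
elim: d => [|d IH]; first by rewrite big_ord0 ffactn0.
rewrite big_ord_recr /= -IH ffactnSr natrM.
have [le_du | lt_ud] := leqP d u; first by rewrite natrB.
by rewrite ffact_small // !(mul0r, mulr0).
Qed.

End BinomialIdentities.

Lemma eq0_of_monic_basis (R : nzRingType) (f : {poly R} -> R)
    (Q : nat -> {poly R}) n :
  (forall (p q : {poly R}) (a : R), f (p - a *: q) = f p - a * f q) ->
  (forall d, Q d \is monic /\ size (Q d) = d.+1) ->
  (forall d, (d < n)%N -> f (Q d) = 0) ->
  forall p : {poly R}, (size p <= n)%N -> f p = 0.
Proof.
move=> f_lin Q_monic; elim: n => [|d IH] fQ0 p.
  by move/size_poly_leq0P ->; rewrite -(subrr 0) -{2}(scale1r 0) f_lin mul1r subrr.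
move=> sz_p; have [/monicP lcQ sizeQ] := Q_monic d.
have := f_lin p (Q d) p`_d; rewrite fQ0 // mulr0 subr0 => <-.
apply: IH => [e lt_ed | ]; first by apply: fQ0; apply: ltnW.
apply/leq_sizeP => j le_dj; rewrite coefB coefZ.
have [-> | ne_jd] := eqVneq j d.
  by move: lcQ; rewrite lead_coefE sizeQ => ->; rewrite mulr1 subrr.
have lt_dj : (d < j)%N by rewrite ltn_neqAle eq_sym ne_jd.
have /leq_sizeP -> // : (size (Q d) <= d.+1)%N by rewrite sizeQ.
by move/leq_sizeP: sz_p => -> //; rewrite mulr0 subrr.
Qed.

Section CharacteristicZero.

Variable R : numFieldType.

Lemma natr_fact_neq0 n : (n`!)%:R != 0 :> R.
Proof. by rewrite pnatr_eq0 -lt0n fact_gt0. Qed.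

Lemma natr_binE n k : (k <= n)%N ->
  'C(n, k)%:R = (n`!)%:R / ((k`!)%:R * ((n - k)`!)%:R) :> R.
Proof.
move=> le_kn.
apply: (mulIf (mulf_neq0 (natr_fact_neq0 k) (natr_fact_neq0 (n - k)))).
by rewrite divfK ?mulf_neq0 ?natr_fact_neq0 // -!natrM bin_fact.
Qed.

Lemma natr_ffactE n k : (k <= n)%N ->
  (n ^_ k)%:R = (n`!)%:R / ((n - k)`!)%:R :> R.
Proof.
move=> le_kn; apply: (mulIf (natr_fact_neq0 (n - k))).
by rewrite divfK ?natr_fact_neq0 // -natrM ffact_fact.
Qed.

Lemma poly_eq0_of_nat_roots N (p : {poly R}) : (size p <= N)%N ->
  (forall j, (j < N)%N -> p.[j%:R] = 0) -> p = 0.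
Proof.
move=> sz_p p0; apply: (@roots_geq_poly_eq0 _ _ [seq j%:R | j <- iota 0 N]).
- apply/allP => x /mapP [j]; rewrite mem_iota add0n => /andP [_ lt_jN] ->.
  exact/rootP/p0.
- by rewrite map_inj_uniq ?iota_uniq // => i j /eqP; rewrite eqr_nat => /eqP.
- by rewrite size_map size_iota.
Qed.

End CharacteristicZero.

Section Shmaliy.

Variable R : realFieldType.
Implicit Types p q : {poly R}.

Lemma poch_natS a k : poch R (a%:R + 1) k = ((a + k) ^_ k)%:R.
Proof.
elim: k => [|k IH]; first by rewrite /poch big_ord0 ffactn0.
rewrite /poch big_ord_recr /= -/(poch R _ k) IH addnS ffactSS natrM [RHS]mulrC.
by rewrite -addrA nat1r -natrD addnS.
Qed.

Lemma poch_oppn m k : poch R (- m%:R) k = (-1) ^+ k * (m ^_ k)%:R.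
Proof.
elim: k => [|k IH]; first by rewrite /poch big_ord0 ffactn0 expr0 mulr1.
rewrite /poch big_ord_recr /= -/(poch R _ k) IH ffactnSr natrM exprS.
have [le_km | lt_mk] := leqP k m; first by rewrite natrB //; ring.
by rewrite ffact_small // !(mulr0, mul0r).
Qed.

Definition rising_poly k : {poly R} := \prod_(i < k) ('X - (- i.+1%:R)%:P).

Lemma horner_rising_poly k x : (rising_poly k).[x] = poch R (x + 1) k.
Proof.
rewrite horner_prod; apply: eq_bigr => i _.
by rewrite hornerXsubC opprK -addrA nat1r.
Qed.

Lemma size_rising_poly k : size (rising_poly k) = k.+1.
Proof. by rewrite size_prod_XsubC [index_enum _]unlock -enumT size_enum_ord. Qed.

Definition hyp_coef m N k : R :=
  poch R (- m%:R) k * poch R (m%:R + 2) k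
    / (poch R 2 k * poch R (N%:R + 1) k * (k`!)%:R).

Definition hyp_poly m N : {poly R} :=
  (m.+1%:R ^+ 2 / N%:R) *: \sum_(k < m.+1) hyp_coef m N k *: rising_poly k.

Lemma horner_hyp_poly m N x : (hyp_poly m N).[x]
  = m.+1%:R ^+ 2 / N%:R * \sum_(k < m.+1) hyp_coef m N k * poch R (x + 1) k.
Proof.
rewrite hornerZ horner_sum; congr (_ * _); apply: eq_bigr => k _.
by rewrite hornerZ horner_rising_poly.
Qed.

Lemma F32_hyp_coef m N x : F32 R (- m%:R) (x + 1) (m%:R + 2) 2 (N%:R + 1) m
  = \sum_(k < m.+1) hyp_coef m N k * poch R (x + 1) k.
Proof. by apply: eq_bigr => k _; rewrite /hyp_coef; ring. Qed.

Lemma size_hyp_poly m N : (size (hyp_poly m N) <= m.+1)%N.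
Proof.
rewrite (leq_trans (size_scale_leq _ _)) // (leq_trans (size_sum _ _ _)) //.
apply/bigmax_leqP => k _.
by rewrite (leq_trans (size_scale_leq _ _)) // size_rising_poly.
Qed.

Lemma hyp_coef_binE m N r k : (m < N)%N -> (r <= m)%N -> (k <= m)%N ->
  m.+1%:R ^+ 2 / N%:R * (hyp_coef m N k * (k`!)%:R) * 'C(N + k, r + k.+1)%:R
    = (-1) ^+ k * 'C(m.+1, k.+1)%:R * 'C(m.+1 + k, m - r)%:R
        * ('C(N.-1, r)%:R / 'C(m, r)%:R).
Proof.
move=> lt_mN le_rm le_km; rewrite /hyp_coef.
have -> : m%:R + 2 = m.+1%:R + 1 :> R by ring.
have -> : 2 = 1%:R + 1 :> R by [].
rewrite poch_oppn !poch_natS !natr_ffactE ?leq_addl // addnK.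
rewrite !natr_binE ?leq_subr //; try lia.
have -> : (N + k - (r + k.+1) = N.-1 - r)%N by lia.
have -> : (m.+1 + k - (m - r) = r + k.+1)%N by lia.
have factN : (N`!)%:R = N%:R * (N.-1`!)%:R :> R.
  by case: N lt_mN => // n _; rewrite factS natrM.
rewrite !addnK subSS add1n factN (factS m) (factS k) !natrM.
field; rewrite !natr_fact_neq0 !nat1r !pnatr_eq0 /= -lt0n; lia.
Qed.

Lemma poch_natS_bin j k : poch R (j%:R + 1) k = (k`!)%:R * 'C(j + k, k)%:R.
Proof. by rewrite poch_natS -natrM mulnC bin_ffact. Qed.

Lemma sum_bin_rev_hyp_poly m N r : (m < N)%N -> (r <= m)%N ->
  \sum_(j < N) 'C(N - j.+1, r)%:R * (hyp_poly m N).[j%:R] = 'C(N.-1, r)%:R :> R.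
Proof.
move=> lt_mN le_rm; set c : R := m.+1%:R ^+ 2 / N%:R.
transitivity (\sum_(j < N) \sum_(k < m.+1) c * (hyp_coef m N k * (k`!)%:R)
                 * ('C(N - j.+1, r) * 'C(j + k, k))%:R).
  apply: eq_bigr => j _; rewrite horner_hyp_poly mulr_sumr mulr_sumr.
  by apply: eq_bigr => k _; rewrite poch_natS_bin natrM -/c; ring.
transitivity (\sum_(k < m.+1) c * (hyp_coef m N k * (k`!)%:R)
                 * 'C(N + k, r + k.+1)%:R).
  rewrite exchange_big /=; apply: eq_bigr => k _.
  by rewrite -mulr_sumr -natr_sum sum_bin_rev_bin.
under eq_bigr => k _ do rewrite (hyp_coef_binE _ _ _ k lt_mN le_rm (ltn_ord k)).
rewrite -big_distrl /= sum_alt_bin_succ ?leq_subr // bin_sub // mulrC divfK //.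
by rewrite pnatr_eq0 -lt0n bin_gt0.
Qed.

Definition rev_ffact_poly N d : {poly R} :=
  \prod_(i < d) ('X - ((N.-1 - i)%:R)%:P).

Lemma horner_rev_ffact_poly N d j : (d <= N)%N -> (j <= N.-1)%N ->
  (rev_ffact_poly N d).[j%:R] = (-1) ^+ d * (d`! * 'C(N.-1 - j, d))%:R.
Proof.
move=> le_dN le_jN; rewrite horner_prod mulnC bin_ffact natr_ffact.
have -> : (-1) ^+ d = \prod_(i < d) (-1 : R) by rewrite prodr_const card_ord.
rewrite -big_split /=; apply: eq_bigr => i _.
have lt_id := ltn_ord i; rewrite hornerXsubC !natrB //; [ring | lia].
Qed.

Lemma sum_hyp_poly_moment m N p : (m < N)%N -> (size p <= m.+1)%N ->
  \sum_(j < N) p.[j%:R] * (hyp_poly m N).[j%:R] = p.[0].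
Proof.
move=> lt_mN sz_p; apply/eqP; rewrite -subr_eq0; apply/eqP.
pose f q := \sum_(j < N) q.[j%:R] * (hyp_poly m N).[j%:R] - q.[0].
apply: (@eq0_of_monic_basis _ f (rev_ffact_poly N) m.+1) sz_p
  => {p} [p q a | d | d le_dm].
- rewrite /f; under eq_bigr => j _ do rewrite hornerD hornerN hornerZ mulrBl -mulrA.
  by rewrite sumrB -mulr_sumr hornerD hornerN hornerZ; ring.
- rewrite monic_prod_XsubC size_prod_XsubC.
  by rewrite [index_enum _]unlock -enumT size_enum_ord.
- have le_dN : (d <= N)%N by lia.
  rewrite /f -[0]/(0%:R) horner_rev_ffact_poly // subn0 natrM.
  rewrite (eq_bigr (fun j : 'I_N => (-1) ^+ d * d`!%:R
             * ('C(N - j.+1, d)%:R * (hyp_poly m N).[j%:R]))) => [|j _]; last first.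
    have lt_jN := ltn_ord j.
    have le_jN : (j <= N.-1)%N by lia.
    rewrite horner_rev_ffact_poly // natrM (_ : N.-1 - j = N - j.+1)%N.
      by ring.
    by lia.
  by rewrite -mulr_sumr sum_bin_rev_hyp_poly // mulrA subrr.
Qed.

Lemma hyp_poly_moments m N r : (m < N)%N -> (r <= m)%N ->
  \sum_(j < N) j%:R ^+ r * (hyp_poly m N).[j%:R] = (r == 0)%:R.
Proof.
move=> lt_mN le_rm; rewrite -expr0n -(hornerXn 0).
rewrite -(sum_hyp_poly_moment _ _ _ lt_mN) ?size_polyXn //.
by apply: eq_bigr => j _; rewrite hornerXn.
Qed.

Lemma poly_rV_mul_hankel m N p (r : 'I_m.+1) : (size p <= m.+1)%N ->
  (poly_rV p *m hankel R m N) 0 r = \sum_(j < N) j%:R ^+ r * p.[j%:R].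
Proof.
move=> sz_p; rewrite !mxE; under eq_bigr => s _ do rewrite !mxE /csum mulr_sumr.
rewrite exchange_big /=; apply: eq_bigr => j _.
rewrite (horner_coef_wide _ sz_p) mulr_sumr; apply: eq_bigr => s _.
by rewrite exprD; ring.
Qed.

Lemma poly_eq0_of_moments m N p : (m < N)%N -> (size p <= m.+1)%N ->
  (forall r, (r <= m)%N -> \sum_(j < N) j%:R ^+ r * p.[j%:R] = 0) -> p = 0.
Proof.
move=> lt_mN sz_p p_orth.
have sqr_sum0 : \sum_(j < N) p.[j%:R] ^+ 2 = 0.
  transitivity (\sum_(s < m.+1) p`_s * \sum_(j < N) j%:R ^+ s * p.[j%:R]).
    under eq_bigr => j _ do rewrite {1}(horner_coef_wide _ sz_p) expr2 mulr_suml.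
    rewrite exchange_big /=; apply: eq_bigr => s _; rewrite mulr_sumr.
    by apply: eq_bigr => j _; rewrite -(horner_coef_wide _ sz_p) mulrA.
  by rewrite big1 // => s _; rewrite p_orth ?mulr0 // -ltnS.
have sqr0 := psumr_eq0P (fun (j : 'I_N) _ => sqr_ge0 p.[j%:R]) sqr_sum0.
apply: poly_eq0_of_nat_roots (leq_trans sz_p lt_mN) _ => j lt_jN.
by apply/eqP; rewrite -sqrf_eq0 (sqr0 (Ordinal lt_jN)).
Qed.

Lemma hankel_unitmx m N : (m < N)%N -> hankel R m N \in unitmx.
Proof.
move=> lt_mN; rewrite unitmxE unitfE; apply/det0P => -[v v_neq0 vH0].
have sz_v : (size (rVpoly v) <= m.+1)%N by apply: size_poly.
have p0 : rVpoly v = 0.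
  apply: (poly_eq0_of_moments _ _ _ lt_mN sz_v) => r le_rm.
  have := poly_rV_mul_hankel _ N _ (Ordinal (le_rm : r < m.+1)%N) sz_v.
  by rewrite rVpolyK vH0 mxE => /= <-.
by move: v_neq0; rewrite -[v]rVpolyK p0 linear0 eqxx.
Qed.

Lemma acoef_invmx m N i : hankel R m N \in unitmx ->
  acoef R m N i = invmx (hankel R m N) 0 i.
Proof.
by move=> H_unit; rewrite /invmx H_unit !mxE /cofactor addn0 mulrC.
Qed.

Lemma shmaliy_eq_horner m N p x : (m < N)%N -> (size p <= m.+1)%N ->
  (forall r, (r <= m)%N -> \sum_(j < N) j%:R ^+ r * p.[j%:R] = (r == 0)%:R) ->
  shmaliy R m x N = p.[x].
Proof.
move=> lt_mN sz_p p_mom; have H_unit := hankel_unitmx _ _ lt_mN.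
have pH : poly_rV p *m hankel R m N = delta_mx 0 0.
  apply/rowP => r; rewrite poly_rV_mul_hankel // p_mom; last by rewrite -ltnS.
  by rewrite mxE.
have p_row : poly_rV p = row 0 (invmx (hankel R m N)) by rewrite rowE -pH mulmxK.
rewrite (horner_coef_wide _ sz_p); apply: eq_bigr => i _.
have := congr1 (fun v : 'rV_m.+1 => v 0 i) p_row.
by rewrite !mxE acoef_invmx // => ->.
Qed.

Lemma hahnQ_F32 m (y M : R) : hahnQ R m (-1 - y) 1 0 (-1 - M)
  = F32 R (- m%:R) (y + 1) (m%:R + 2) 2 (M + 1) m.
Proof.
apply: eq_bigr => k _; rewrite !opprB !opprK.
have -> : m%:R + 1 + 0 + 1 = m%:R + 2 :> R by ring.
by congr (_ / _); rewrite mulrAC.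
Qed.

End Shmaliy.

Theorem mainTheorem1 (R : realFieldType) (m N n : nat) :
  (m.+1 <= N)%N -> (n <= N.-1)%N ->
  shmaliy R m n%:R N
    = (m.+1%:R) ^+ 2 / N%:R
        * F32 R (- m%:R) (n%:R + 1) (m%:R + 2) 2 (N%:R + 1) m
  /\
  (m.+1%:R) ^+ 2 / N%:R * F32 R (- m%:R) (n%:R + 1) (m%:R + 2) 2 (N%:R + 1) m
    = (m.+1%:R) ^+ 2 / N%:R * hahnQ R m (-1 - n%:R) 1 0 (-1 - N%:R).
Proof.
(* the identity is between polynomials in n *)
move=> lt_mN _; split.
  rewrite (shmaliy_eq_horner _ _ _ (hyp_poly R m N) _ lt_mN) ?size_hyp_poly //.
    by rewrite horner_hyp_poly F32_hyp_coef.
  by move=> r; apply: hyp_poly_moments.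
by rewrite hahnQ_F32.
Qed.
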